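(* Let $E$ be a pseudo effect algebra satisfying (RDP), let $s_1,s_2\in\mathcal S(E)$, and let $F_1,F_2$ be the faces of $\mathcal S(E)$ generated by $s_1$ and $s_2$ respectively. The following are equivalent: (i) $F_1\cap F_2=\emptyset$; (ii) $s_1\wedge s_2=0$ in $\mathcal J(E)$; (iii) $s_1\vee s_2=s_1+s_2$ in $\mathcal J(E)$; (iv) for every $x\in E$ and every $\epsilon>0$ there exist $x_1,x_2\in E$ with $x=x_1+x_2$, $s_1(x)-s_1(x_1)<\epsilon$ and $s_2(x)-s_2(x_2)<\epsilon$. In particular, if $s_1,s_2$ are two distinct extremal states of $E$, then $s_1\wedge s_2=0$.
   Context: Pseudo effect algebra: partial algebra $(E;+,0,1)$ such that for all $a,b,c$: (i) $a+b$ and $(a+b)+c$ exist iff $b+c$ and $a+(b+c)$ exist, and then they are equal; (ii) there is exactly one $d$ and one $e$ with $a+d=e+a=1$; (iii) if $a+b$ exists there are $d,e$ with $a+b=d+a=b+e$; (iv) if $1+a$ or $a+1$ exists then $a=0$. (RDP): whenever $a_1+a_2=b_1+b_2$ there are $d_1,\dots,d_4$ with $d_1+d_2=a_1$, $d_3+d_4=a_2$, $d_1+d_3=b_1$, $d_2+d_4=b_2$. Signed measure: $m:E\to\mathbb R$ additive on defined sums; measure: nonnegative signed measure; state: measure with $s(1)=1$; $\mathcal S(E)$: set of states; extremal state: extreme point of the convex set $\mathcal S(E)$. $\mathcal J(E)$: signed measures that are differences of two measures, ordered by $m_1\le^+m_2$ iff $m_2-m_1$ is a measure; under (RDP) it is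 a lattice-ordered group, and $\wedge,\vee$ refer to this lattice. A face of a convex set $K$ is a convex $F\subseteq K$ such that $\lambda x_1+(1-\lambda)x_2\in F$, $x_1,x_2\in K$, $0<\lambda<1$ imply $x_1,x_2\in F$; the face generated by a point is the smallest face containing it. *)

From Stdlib Require Import Reals.
Open Scope R_scope.

Section PEA.
Variable E : Type.
Variable plus : E -> E -> option E.   (* partial addition: None = undefined *)
Variables zero one : E.

Definition oplus (x y : option E) : option E :=
  match x, y with Some a, Some b => plus a b | _, _ => None end.

Definition defined (x : option E) : Prop := x <> None.

Definition is_PEA : Prop :=
  (* (i) (a+b)+c defined iff a+(b+c) defined, and then equal *)
  (forall a b c, oplus (plus a b) (Some c) = oplus (Some a) (plus b c)) /\
  (forall a, (exists! d, plus a d = Some one) /\ (exists! e, plus e a = Some one)) /\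
  (forall a b ab, plus a b = Some ab ->
     exists d e, plus d a = Some ab /\ plus b e = Some ab) /\
  (forall a, defined (plus one a) \/ defined (plus a one) -> a = zero).

Definition RDP : Prop :=
  forall a1 a2 b1 b2 c, plus a1 a2 = Some c -> plus b1 b2 = Some c ->
  exists d1 d2 d3 d4,
    plus d1 d2 = Some a1 /\ plus d3 d4 = Some a2 /\
    plus d1 d3 = Some b1 /\ plus d2 d4 = Some b2.

Definition signed_measure (m : E -> R) : Prop :=
  forall a b c, plus a b = Some c -> m c = m a + m b.

Definition measure (m : E -> R) : Prop :=
  signed_measure m /\ forall a, 0 <= m a.

Definition state (s : E -> R) : Prop := measure s /\ s one = 1.

Definition in_J (m : E -> R) : Prop :=
  exists m1 m2, measure m1 /\ measure m2 /\ forall a, m a = m1 a - m2 a.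

Definition leJ (m1 m2 : E -> R) : Prop := measure (fun a => m2 a - m1 a).

Definition is_meetJ (m1 m2 m : E -> R) : Prop :=
  in_J m /\ leJ m m1 /\ leJ m m2 /\
  forall k, in_J k -> leJ k m1 -> leJ k m2 -> leJ k m.

Definition is_joinJ (m1 m2 m : E -> R) : Prop :=
  in_J m /\ leJ m1 m /\ leJ m2 m /\
  forall k, in_J k -> leJ m1 k -> leJ m2 k -> leJ m k.

Definition convcomb (l : R) (x1 x2 : E -> R) : E -> R :=
  fun a => l * x1 a + (1 - l) * x2 a.

Definition face (F : (E -> R) -> Prop) : Prop :=
  (forall x, F x -> state x) /\
  (forall l x1 x2, 0 <= l <= 1 -> F x1 -> F x2 -> F (convcomb l x1 x2)) /\
  (forall l x1 x2, state x1 -> state x2 -> 0 < l < 1 ->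
     F (convcomb l x1 x2) -> F x1 /\ F x2).

Definition face_gen (s : E -> R) : (E -> R) -> Prop :=
  fun t => forall F, face F -> F s -> F t.

Definition extremal_state (s : E -> R) : Prop :=
  state s /\
  forall l x1 x2, state x1 -> state x2 -> 0 < l < 1 ->
    s = convcomb l x1 x2 -> x1 = s /\ x2 = s.

End PEA.
Arguments is_PEA {E}.
Arguments RDP {E}.
Arguments state {E}.
Arguments is_meetJ {E}.
Arguments is_joinJ {E}.
Arguments face_gen {E}.
Arguments extremal_state {E}.

(* The meet of two measures [mu, nu] in [J(E)] is their split infimum
   [m x = inf { mu x1 + nu x2 | x = x1 + x2 }]: associativity and axiom (iii) make [m]
   subadditive, and (RDP), by refining two decompositions of [a + b], makes it superadditive,
   so [m] is a measure below [mu] and [nu] that dominates every signed measure below both.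
   The face generated by a state [s] is the set of states [t] with [c t <= s] for some [c > 0].
   Hence a common point of the two faces is, up to scaling, a nonzero measure below [s1] and
   [s2], and conversely [m / m 1] is such a point when [m 1 > 0]. The involution
   [k |-> s1 + s2 - k] of [J(E)] exchanges lower and upper bounds of [{s1, s2}], so the meet
   is [0] iff the join is [s1 + s2]; and (iv) says that the split infimum of [s2, s1]
   vanishes. An extremal state generates the face [{s}], so distinct extremal states generate
   disjoint faces. *)

From Stdlib Require Import Reals Lra Classical FunctionalExtensionality.
Open Scope R_scope.

Section SignedMeasures.
Variables (E : Type) (plus : E -> E -> option E).

Lemma measure_const0 : measure E plus (fun _ => 0).
Proof. split; [intros a b c _ | intros a]; lra. Qed.

Lemma measure_add f g :
  measure E plus f -> measure E plus g -> measure E plus (fun a => f a + g a).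
Proof.
  intros [Sf Pf] [Sg Pg]; split.
  - intros a b c H; rewrite (Sf _ _ _ H), (Sg _ _ _ H); ring.
  - intros a; specialize (Pf a); specialize (Pg a); lra.
Qed.

Lemma measure_scale c f :
  0 <= c -> measure E plus f -> measure E plus (fun a => c * f a).
Proof.
  intros Hc [Sf Pf]; split.
  - intros a b d H; rewrite (Sf _ _ _ H); ring.
  - intros a; apply Rmult_le_pos; auto.
Qed.

Lemma measure_in_J f : measure E plus f -> in_J E plus f.
Proof.
  intros Hf; exists f, (fun _ => 0).
  split; [exact Hf | split; [apply measure_const0 | intros; ring]].
Qed.

Lemma in_J_sub f g :
  in_J E plus f -> in_J E plus g -> in_J E plus (fun a => f a - g a).
Proof.
  intros [f1 [f2 [H1 [H2 Hf]]]] [g1 [g2 [G1 [G2 Hg]]]].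
  exists (fun a => f1 a + g2 a), (fun a => f2 a + g1 a).
  split; [|split]; [apply measure_add; auto .. | intros a; rewrite Hf, Hg; ring].
Qed.

Lemma in_J_signed_measure f : in_J E plus f -> signed_measure E plus f.
Proof.
  intros [f1 [f2 [[S1 _] [[S2 _] Hf]]]] a b c H.
  rewrite !Hf, (S1 _ _ _ H), (S2 _ _ _ H); ring.
Qed.

Lemma leJ_le f g : leJ E plus f g -> forall a, f a <= g a.
Proof. intros [_ H] a; specialize (H a); simpl in H; lra. Qed.

Lemma le_leJ f g : signed_measure E plus f -> signed_measure E plus g ->
  (forall a, f a <= g a) -> leJ E plus f g.
Proof.
  intros Sf Sg H; split.
  - intros a b c Hc; rewrite (Sf _ _ _ Hc), (Sg _ _ _ Hc); ring.
  - intros a; specialize (H a); lra.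
Qed.

End SignedMeasures.

Section PseudoEffectAlgebra.
Variables (E : Type) (plus : E -> E -> option E) (zero one : E).
Hypothesis HE : is_PEA plus zero one.

Lemma plus_assoc_l a b c ab abc :
  plus a b = Some ab -> plus ab c = Some abc ->
  exists bc, plus b c = Some bc /\ plus a bc = Some abc.
Proof.
  intros Hab Habc; pose proof (proj1 HE a b c) as A.
  rewrite Hab in A; simpl in A; rewrite Habc in A.
  destruct (plus b c) as [bc|]; [exists bc; auto | discriminate].
Qed.

Lemma plus_assoc_r a b c bc abc :
  plus b c = Some bc -> plus a bc = Some abc ->
  exists ab, plus a b = Some ab /\ plus ab c = Some abc.
Proof.
  intros Hbc Habc; pose proof (proj1 HE a b c) as A.
  rewrite Hbc in A; simpl in A; rewrite Habc in A.
  destruct (plus a b) as [ab|]; [exists ab; auto | discriminate].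
Qed.

Lemma plus_one_zero : plus one zero = Some one /\ plus zero one = Some one.
Proof.
  destruct HE as [_ [Hc [_ Hiv]]]; split.
  - destruct (proj1 (Hc one)) as [d [Hd _]].
    replace zero with d; auto.
    apply Hiv; left; unfold defined; rewrite Hd; discriminate.
  - destruct (proj2 (Hc one)) as [e [He _]].
    replace zero with e; auto.
    apply Hiv; right; unfold defined; rewrite He; discriminate.
Qed.

(* Cancel the complement: [e + x = 1 = e + (x + 0)] and [e + _ = 1] has a unique solution. *)
Lemma plus_zero_r x : plus x zero = Some x.
Proof.
  destruct HE as [_ [Hc _]].
  destruct (proj2 (Hc x)) as [e [He _]].
  destruct (plus_assoc_l e x zero one one He (proj1 plus_one_zero)) as [y [Hy Hey]].
  destruct (proj1 (Hc e)) as [d [_ Hd]].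
  rewrite Hy; f_equal; rewrite <- (Hd y Hey); apply Hd, He.
Qed.

Lemma plus_zero_l x : plus zero x = Some x.
Proof.
  destruct HE as [_ [Hc _]].
  destruct (proj1 (Hc x)) as [d [Hd _]].
  destruct (plus_assoc_r zero x d one one Hd (proj2 plus_one_zero)) as [y [Hy Hyd]].
  destruct (proj2 (Hc d)) as [e [_ He]].
  rewrite Hy; f_equal; rewrite <- (He y Hyd); apply He, Hd.
Qed.

(* [(a1 + a2) + (b1 + b2) = (a1 + d) + (a2 + b2)], where [d + a2 = a2 + b1] by axiom (iii). *)
Lemma plus_interchange a1 a2 b1 b2 a b ab :
  plus a1 a2 = Some a -> plus b1 b2 = Some b -> plus a b = Some ab ->
  exists d c y1 y2, plus d a2 = Some c /\ plus a2 b1 = Some c /\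
    plus a1 d = Some y1 /\ plus a2 b2 = Some y2 /\ plus y1 y2 = Some ab.
Proof.
  intros Ha Hb Hab.
  destruct (plus_assoc_l _ _ _ _ _ Ha Hab) as [w [Hw Hab']].
  destruct (plus_assoc_r _ _ _ _ _ Hb Hw) as [c [Hc Hw']].
  destruct (proj1 (proj2 (proj2 HE)) a2 b1 c Hc) as [d [_ [Hd _]]].
  destruct (plus_assoc_l _ _ _ _ _ Hd Hw') as [y2 [Hy2 Hw'']].
  destruct (plus_assoc_r _ _ _ _ _ Hw'' Hab') as [y1 [Hy1 Hab'']].
  exists d, c, y1, y2; auto.
Qed.

Lemma signed_measure_zero m : signed_measure E plus m -> m zero = 0.
Proof. intros Sm; pose proof (Sm _ _ _ (plus_zero_r zero)); lra. Qed.

Lemma measure_le_one m : measure E plus m -> forall x, m x <= m one.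
Proof.
  intros [Sm Pm] x.
  destruct (proj1 (proj1 (proj2 HE) x)) as [d [Hd _]].
  rewrite (Sm _ _ _ Hd); specialize (Pm d); lra.
Qed.

End PseudoEffectAlgebra.

Definition is_split_inf (E : Type) (plus : E -> E -> option E) (mu nu m : E -> R) : Prop :=
  forall x,
    (forall x1 x2, plus x1 x2 = Some x -> m x <= mu x1 + nu x2) /\
    (forall r, (forall x1 x2, plus x1 x2 = Some x -> r <= mu x1 + nu x2) -> r <= m x).
Arguments is_split_inf {E}.

Section SplitInfimum.
Variables (E : Type) (plus : E -> E -> option E) (zero one : E).
Hypothesis HE : is_PEA plus zero one.
Variables mu nu : E -> R.
Hypotheses (Hmu : measure E plus mu) (Hnu : measure E plus nu).

Lemma split_inf_exists : exists m, is_split_inf plus mu nu m.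
Proof.
  destruct Hmu as [_ Pmu]; destruct Hnu as [_ Pnu].
  set (sums x r := exists x1 x2, plus x1 x2 = Some x /\ r = - (mu x1 + nu x2)).
  assert (Hlub : forall x, {l | is_lub (sums x) l}).
  { intros x; apply completeness.
    - exists 0; intros r [x1 [x2 [_ ->]]]; specialize (Pmu x1); specialize (Pnu x2); lra.
    - exists (- (mu zero + nu x)), zero, x.
      split; [apply (plus_zero_l _ _ _ _ HE) | reflexivity]. }
  exists (fun x => - proj1_sig (Hlub x)); intros x.
  destruct (Hlub x) as [l [Hub Hleast]]; simpl; split.
  - intros x1 x2 H.
    assert (- (mu x1 + nu x2) <= l) by (apply Hub; exists x1, x2; auto); lra.
  - intros r Hr.
    assert (l <= - r); [|lra].
    apply Hleast; intros y [x1 [x2 [H ->]]]; specialize (Hr x1 x2 H); lra.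
Qed.

Variable m : E -> R.
Hypothesis Hm : is_split_inf plus mu nu m.

Lemma split_inf_le x x1 x2 : plus x1 x2 = Some x -> m x <= mu x1 + nu x2.
Proof. apply (proj1 (Hm x)). Qed.

Lemma split_inf_greatest x r :
  (forall x1 x2, plus x1 x2 = Some x -> r <= mu x1 + nu x2) -> r <= m x.
Proof. apply (proj2 (Hm x)). Qed.

Lemma split_inf_le_l x : m x <= mu x.
Proof.
  pose proof (split_inf_le x x zero (plus_zero_r _ _ _ _ HE x)).
  rewrite (signed_measure_zero _ _ _ _ HE nu (proj1 Hnu)) in *; lra.
Qed.

Lemma split_inf_le_r x : m x <= nu x.
Proof.
  pose proof (split_inf_le x zero x (plus_zero_l _ _ _ _ HE x)).
  rewrite (signed_measure_zero _ _ _ _ HE mu (proj1 Hmu)) in *; lra.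
Qed.

Lemma split_inf_nonneg x : 0 <= m x.
Proof.
  apply split_inf_greatest; intros x1 x2 _.
  pose proof (proj2 Hmu x1); pose proof (proj2 Hnu x2); lra.
Qed.

Lemma split_inf_ge_signed_measure k :
  signed_measure E plus k -> (forall x, k x <= mu x) -> (forall x, k x <= nu x) ->
  forall x, k x <= m x.
Proof.
  intros Sk Kmu Knu x; apply split_inf_greatest; intros x1 x2 H.
  rewrite (Sk _ _ _ H); specialize (Kmu x1); specialize (Knu x2); lra.
Qed.

Lemma split_inf_approx x eps : 0 < eps ->
  exists x1 x2, plus x1 x2 = Some x /\ mu x1 + nu x2 < m x + eps.
Proof.
  intros Heps; apply NNPP; intros Hnone.
  assert (m x + eps <= m x) by
    (apply split_inf_greatest; intros x1 x2 H; apply Rnot_lt_le; intros Hlt;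
     apply Hnone; exists x1, x2; auto).
  lra.
Qed.

Lemma split_inf_subadditive a b ab : plus a b = Some ab -> m ab <= m a + m b.
Proof.
  intros Hab.
  assert (Hsplit : forall a1 a2 b1 b2, plus a1 a2 = Some a -> plus b1 b2 = Some b ->
            m ab <= mu a1 + nu a2 + (mu b1 + nu b2)).
  { intros a1 a2 b1 b2 Ha Hb.
    destruct (plus_interchange _ _ _ _ HE _ _ _ _ _ _ _ Ha Hb Hab)
      as [d [c [y1 [y2 [Hd [Hc [Hy1 [Hy2 Hy]]]]]]]].
    pose proof (split_inf_le _ _ _ Hy) as Hle.
    destruct Hmu as [Smu _]; destruct Hnu as [Snu _].
    rewrite (Smu _ _ _ Hy1), (Snu _ _ _ Hy2) in Hle.
    pose proof (Smu _ _ _ Hd); pose proof (Smu _ _ _ Hc); lra. }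
  assert (m ab - m b <= m a); [|lra].
  apply split_inf_greatest; intros a1 a2 Ha.
  assert (m ab - (mu a1 + nu a2) <= m b); [|lra].
  apply split_inf_greatest; intros b1 b2 Hb; specialize (Hsplit a1 a2 b1 b2 Ha Hb); lra.
Qed.

Hypothesis HR : RDP plus.

Lemma split_inf_superadditive a b ab : plus a b = Some ab -> m a + m b <= m ab.
Proof.
  intros Hab; apply split_inf_greatest; intros y1 y2 Hy.
  destruct (HR a b y1 y2 ab Hab Hy) as [d1 [d2 [d3 [d4 [H12 [H34 [H13 H24]]]]]]].
  pose proof (split_inf_le _ _ _ H12); pose proof (split_inf_le _ _ _ H34).
  rewrite (proj1 Hmu _ _ _ H13), (proj1 Hnu _ _ _ H24); lra.
Qed.

Lemma split_inf_measure : measure E plus m.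
Proof.
  split; [|exact split_inf_nonneg].
  intros a b ab Hab; apply Rle_antisym;
    [apply split_inf_subadditive | apply split_inf_superadditive]; auto.
Qed.

End SplitInfimum.

Definition dominated_by (E : Type) (s t : E -> R) : Prop :=
  exists c, 0 < c /\ forall a, c * t a <= s a.
Arguments dominated_by {E}.

Section Faces.
Variables (E : Type) (plus : E -> E -> option E) (one : E).

Lemma state_convcomb l x1 x2 : 0 <= l <= 1 ->
  state plus one x1 -> state plus one x2 -> state plus one (convcomb E l x1 x2).
Proof.
  intros Hl [[S1 P1] O1] [[S2 P2] O2]; unfold convcomb; split; [split|].
  - intros a b c H; rewrite (S1 _ _ _ H), (S2 _ _ _ H); ring.
  - intros a; specialize (P1 a); specialize (P2 a); nra.
  - rewrite O1, O2; ring.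
Qed.

Lemma dominated_by_weaken (s t : E -> R) c c' : 0 <= c' <= c ->
  (forall a, 0 <= t a) -> (forall a, c * t a <= s a) -> forall a, c' * t a <= s a.
Proof. intros Hc Pt H a; specialize (Pt a); specialize (H a); nra. Qed.

Lemma dominated_face s :
  face E plus one (fun t => state plus one t /\ dominated_by s t).
Proof.
  split; [|split].
  - intros t [Ht _]; exact Ht.
  - intros l x1 x2 Hl [Hx1 [c1 [Hc1 B1]]] [Hx2 [c2 [Hc2 B2]]].
    split; [apply state_convcomb; auto|].
    pose proof (proj2 (proj1 Hx1)) as P1; pose proof (proj2 (proj1 Hx2)) as P2.
    exists (Rmin c1 c2); split; [apply Rmin_glb_lt; auto|]; intros a.
    pose proof (dominated_by_weaken s x1 c1 (Rmin c1 c2)) as W1.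
    pose proof (dominated_by_weaken s x2 c2 (Rmin c1 c2)) as W2.
    assert (0 < Rmin c1 c2 <= c1) by (split; [apply Rmin_glb_lt | apply Rmin_l]; auto).
    assert (0 < Rmin c1 c2 <= c2) by (split; [apply Rmin_glb_lt | apply Rmin_r]; auto).
    specialize (W1 ltac:(lra) P1 B1 a); specialize (W2 ltac:(lra) P2 B2 a).
    unfold convcomb; nra.
  - intros l x1 x2 Hx1 Hx2 Hl [_ [c [Hc B]]].
    pose proof (proj2 (proj1 Hx1)) as P1; pose proof (proj2 (proj1 Hx2)) as P2.
    unfold convcomb in B.
    split; split; auto.
    + exists (c * l); split; [nra|]; intros a.
      specialize (B a); specialize (P2 a); assert (0 <= c * (1 - l) * x2 a) by
        (apply Rmult_le_pos; [nra | auto]); nra.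
    + exists (c * (1 - l)); split; [nra|]; intros a.
      specialize (B a); specialize (P1 a); assert (0 <= c * l * x1 a) by
        (apply Rmult_le_pos; [nra | auto]); nra.
Qed.

(* If [c t <= s], then [s] is the convex combination of [t] and the state
   [(s - (c/2) t) / (1 - c/2)] with weight [c/2 < 1]. *)
Lemma face_gen_iff_dominated s t : state plus one s ->
  face_gen plus one s t <-> state plus one t /\ dominated_by s t.
Proof.
  intros Hs; split.
  - intros Hst; apply Hst; [apply dominated_face|].
    split; [exact Hs | exists 1; split; [lra | intros a; lra]].
  - intros [Ht [c [Hc B]]] F [_ [_ Hext]] HFs.
    pose proof Hs as [[Ss Ps] Os]; pose proof Ht as [[St Pt] Ot].
    assert (Hc1 : c <= 1) by (specialize (B one); rewrite Os, Ot in B; lra).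
    set (z := fun a => (s a - c / 2 * t a) / (1 - c / 2)).
    assert (Hz : state plus one z).
    { unfold z; split; [split|].
      - intros x y w H; rewrite (Ss _ _ _ H), (St _ _ _ H); field; lra.
      - intros a; unfold Rdiv; apply Rmult_le_pos.
        + specialize (B a); specialize (Pt a); nra.
        + left; apply Rinv_0_lt_compat; lra.
      - rewrite Os, Ot; field; lra. }
    assert (Hs_comb : s = convcomb E (c / 2) t z).
    { apply functional_extensionality; intros a; unfold convcomb, z; field; lra. }
    rewrite Hs_comb in HFs; apply (Hext (c / 2) t z Ht Hz); [lra | exact HFs].
Qed.

Lemma face_gen_extremal s t :
  extremal_state plus one s -> face_gen plus one s t -> t = s.
Proof.
  intros [Hs Hext] Hst; apply (Hst (fun t : E -> R => t = s)); [|reflexivity].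
  split; [intros x ->; exact Hs | split].
  - intros l x1 x2 _ -> ->; apply functional_extensionality; intros a; unfold convcomb; ring.
  - intros l x1 x2 H1 H2 Hl Heq; apply (Hext l x1 x2 H1 H2 Hl); symmetry; exact Heq.
Qed.

End Faces.

Section Orthogonality.
Variables (E : Type) (plus : E -> E -> option E) (zero one : E).
Variables s1 s2 : E -> R.
Hypotheses (Hs1 : measure E plus s1) (Hs2 : measure E plus s2).

Lemma meetJ0_iff :
  is_meetJ plus s1 s2 (fun _ => 0) <->
  forall k, in_J E plus k -> (forall a, k a <= s1 a) -> (forall a, k a <= s2 a) ->
    forall a, k a <= 0.
Proof.
  pose proof (measure_const0 E plus) as H0.
  split.
  - intros [_ [_ [_ Hglb]]] k Hk K1 K2.
    pose proof (in_J_signed_measure _ _ _ Hk) as Sk.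
    apply (leJ_le E plus), Hglb; auto;
      apply le_leJ; auto; [exact (proj1 Hs1) | exact (proj1 Hs2)].
  - intros Hglb; split; [apply measure_in_J; auto | split; [|split]].
    + apply le_leJ; [exact (proj1 H0) | exact (proj1 Hs1) | exact (proj2 Hs1)].
    + apply le_leJ; [exact (proj1 H0) | exact (proj1 Hs2) | exact (proj2 Hs2)].
    + intros k Hk K1 K2; apply le_leJ; [apply in_J_signed_measure; auto | exact (proj1 H0) |].
      apply Hglb; [exact Hk | exact (leJ_le _ _ _ _ K1) | exact (leJ_le _ _ _ _ K2)].
Qed.

Lemma joinJ_sum_iff :
  is_joinJ plus s1 s2 (fun a => s1 a + s2 a) <->
  forall k, in_J E plus k -> (forall a, s1 a <= k a) -> (forall a, s2 a <= k a) ->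
    forall a, s1 a + s2 a <= k a.
Proof.
  pose proof (measure_add _ _ _ _ Hs1 Hs2) as H12.
  split.
  - intros [_ [_ [_ Hlub]]] k Hk K1 K2.
    pose proof (in_J_signed_measure _ _ _ Hk) as Sk.
    apply (leJ_le E plus), Hlub; auto;
      apply le_leJ; auto; [exact (proj1 Hs1) | exact (proj1 Hs2)].
  - intros Hlub; split; [apply measure_in_J; auto | split; [|split]].
    + apply le_leJ; [exact (proj1 Hs1) | exact (proj1 H12) |].
      intros a; pose proof (proj2 Hs2 a); lra.
    + apply le_leJ; [exact (proj1 Hs2) | exact (proj1 H12) |].
      intros a; pose proof (proj2 Hs1 a); lra.
    + intros k Hk K1 K2; apply le_leJ; [exact (proj1 H12) | apply in_J_signed_measure; auto |].
      apply Hlub; [exact Hk | exact (leJ_le _ _ _ _ K1) | exact (leJ_le _ _ _ _ K2)].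
Qed.

Lemma meetJ0_iff_joinJ_sum :
  is_meetJ plus s1 s2 (fun _ => 0) <-> is_joinJ plus s1 s2 (fun a => s1 a + s2 a).
Proof.
  rewrite meetJ0_iff, joinJ_sum_iff.
  assert (Hreflect : forall k, in_J E plus k -> in_J E plus (fun a => s1 a + s2 a - k a))
    by (intros k Hk; apply in_J_sub, Hk; apply measure_in_J, measure_add; auto).
  split.
  - intros Hglb k Hk K1 K2 a.
    pose proof (Hglb _ (Hreflect k Hk)) as H; simpl in H.
    assert (s1 a + s2 a - k a <= 0); [|lra].
    apply H; intros b; [specialize (K2 b) | specialize (K1 b)]; lra.
  - intros Hlub k Hk K1 K2 a.
    pose proof (Hlub _ (Hreflect k Hk)) as H; simpl in H.
    assert (s1 a + s2 a <= s1 a + s2 a - k a); [|lra].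
    apply H; intros b; [specialize (K2 b) | specialize (K1 b)]; lra.
Qed.

Hypotheses (HE : is_PEA plus zero one) (HR : RDP plus).

(* [s1 x - s1 x1 = s1 x2] and [s2 x - s2 x2 = s2 x1]: (iv) bounds [s2 x1 + s1 x2]. *)
Lemma meetJ0_iff_approx :
  is_meetJ plus s1 s2 (fun _ => 0) <->
  forall x eps, 0 < eps -> exists x1 x2,
    plus x1 x2 = Some x /\ s1 x - s1 x1 < eps /\ s2 x - s2 x2 < eps.
Proof.
  rewrite meetJ0_iff.
  split.
  - intros Hglb x eps Heps.
    destruct (split_inf_exists _ _ _ _ HE s2 s1 Hs2 Hs1) as [m Hm].
    pose proof (split_inf_measure E plus zero one HE s2 s1 Hs2 Hs1 m Hm HR) as Mm.
    assert (Hm0 : m x <= 0).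
    { apply Hglb; [apply measure_in_J; exact Mm | |].
      - exact (split_inf_le_r E plus zero one HE s2 s1 Hs2 m Hm).
      - exact (split_inf_le_l E plus zero one HE s2 s1 Hs1 m Hm). }
    destruct (split_inf_approx _ _ s2 s1 _ Hm x eps Heps) as [x1 [x2 [Hx Hlt]]].
    exists x1, x2; split; [exact Hx|].
    rewrite (proj1 Hs1 _ _ _ Hx), (proj1 Hs2 _ _ _ Hx).
    pose proof (proj2 Hs1 x2); pose proof (proj2 Hs2 x1); lra.
  - intros Happrox k Hk K1 K2 x; apply Rnot_lt_le; intros Hpos.
    destruct (Happrox x (k x / 2)) as [x1 [x2 [Hx [Lt1 Lt2]]]]; [lra|].
    rewrite (proj1 Hs1 _ _ _ Hx) in Lt1; rewrite (proj1 Hs2 _ _ _ Hx) in Lt2.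
    pose proof (in_J_signed_measure _ _ _ Hk _ _ _ Hx).
    specialize (K2 x1); specialize (K1 x2); lra.
Qed.

End Orthogonality.

Lemma measure_normalize (E : Type) (plus : E -> E -> option E) (one : E) m :
  measure E plus m -> 0 < m one -> state plus one (fun a => m a / m one).
Proof.
  intros [Sm Pm] Hpos; split; [split|].
  - intros a b c H; rewrite (Sm _ _ _ H); field; lra.
  - intros a; unfold Rdiv; apply Rmult_le_pos; [apply Pm | left; apply Rinv_0_lt_compat; lra].
  - field; lra.
Qed.

Section StateFaces.
Variables (E : Type) (plus : E -> E -> option E) (zero one : E).
Hypotheses (HE : is_PEA plus zero one) (HR : RDP plus).
Variables s1 s2 : E -> R.
Hypotheses (Hs1 : state plus one s1) (Hs2 : state plus one s2).

Lemma disjoint_face_gen_iff_meetJ0 :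
  (forall t, ~ (face_gen plus one s1 t /\ face_gen plus one s2 t)) <->
  is_meetJ plus s1 s2 (fun _ => 0).
Proof.
  destruct Hs1 as [Ms1 O1]; destruct Hs2 as [Ms2 O2].
  rewrite meetJ0_iff by assumption.
  split.
  - intros Hdisj k Hk K1 K2 a.
    destruct (split_inf_exists E plus zero one HE s1 s2 Ms1 Ms2) as [m Hm].
    pose proof (split_inf_measure E plus zero one HE s1 s2 Ms1 Ms2 m Hm HR) as Mm.
    pose proof (split_inf_le_l E plus zero one HE s1 s2 Ms2 m Hm) as L1.
    pose proof (split_inf_le_r E plus zero one HE s1 s2 Ms1 m Hm) as L2.
    assert (Hone : m one <= 0).
    { apply Rnot_lt_le; intros Hpos.
      pose proof (measure_normalize E plus one m Mm Hpos) as Ht.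
      assert (Hdom : forall s, (forall a, m a <= s a) ->
                       dominated_by s (fun a => m a / m one)).
      { intros s Hms; exists (m one); split; [exact Hpos|].
        intros b; replace (m one * (m b / m one)) with (m b) by (field; lra); apply Hms. }
      apply (Hdisj (fun a => m a / m one)); split;
        apply face_gen_iff_dominated; auto. }
    pose proof (split_inf_ge_signed_measure E plus s1 s2 m Hm k
                  (in_J_signed_measure _ _ _ Hk) K1 K2 a).
    pose proof (measure_le_one E plus zero one HE m Mm a); lra.
  - intros Hglb t [H1 H2].
    apply face_gen_iff_dominated in H1; [|split; auto].
    apply face_gen_iff_dominated in H2; [|split; auto].
    destruct H1 as [[[St Pt] Ot] [c1 [Hc1 B1]]]; destruct H2 as [_ [c2 [Hc2 B2]]].
    set (c := Rmin c1 c2).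
    assert (Hc : 0 < c) by (apply Rmin_glb_lt; auto).
    assert (c * t one <= 0); [|rewrite Ot in *; lra].
    apply (Hglb (fun a => c * t a)).
    + apply measure_in_J, measure_scale; [lra | split; auto].
    + apply (dominated_by_weaken E s1 t c1); auto; split; [lra | apply Rmin_l].
    + apply (dominated_by_weaken E s2 t c2); auto; split; [lra | apply Rmin_r].
Qed.
End StateFaces.

Theorem proposition4p2 (E : Type) (plus : E -> E -> option E) (zero one : E)
  (HE : is_PEA plus zero one) (HR : RDP plus) :
  (forall s1 s2 : E -> R,
     state plus one s1 -> state plus one s2 ->
     let F1 := face_gen plus one s1 in
     let F2 := face_gen plus one s2 in
     ((forall t, ~ (F1 t /\ F2 t)) <-> is_meetJ plus s1 s2 (fun _ => 0)) /\
     (is_meetJ plus s1 s2 (fun _ => 0) <-> is_joinJ plus s1 s2 (fun a => s1 a + s2 a)) /\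
     (is_joinJ plus s1 s2 (fun a => s1 a + s2 a) <->
        (forall x eps, 0 < eps -> exists x1 x2,
           plus x1 x2 = Some x /\ s1 x - s1 x1 < eps /\ s2 x - s2 x2 < eps))) /\
  (forall s1 s2 : E -> R,
     extremal_state plus one s1 -> extremal_state plus one s2 -> s1 <> s2 ->
     is_meetJ plus s1 s2 (fun _ => 0)).
Proof.
  split.
  - intros s1 s2 Hs1 Hs2 F1 F2.
    pose proof (meetJ0_iff_joinJ_sum E plus s1 s2 (proj1 Hs1) (proj1 Hs2)) as Hmeet_join.
    split; [|split].
    + exact (disjoint_face_gen_iff_meetJ0 E plus zero one HE HR s1 s2 Hs1 Hs2).
    + exact Hmeet_join.
    + rewrite <- Hmeet_join.
      exact (meetJ0_iff_approx E plus zero one s1 s2 (proj1 Hs1) (proj1 Hs2) HE HR).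
  - intros s1 s2 X1 X2 Hne.
    apply (disjoint_face_gen_iff_meetJ0 E plus zero one HE HR s1 s2 (proj1 X1) (proj1 X2)).
    intros t [T1 T2]; apply Hne.
    rewrite <- (face_gen_extremal E plus one s1 t X1 T1).
    exact (face_gen_extremal E plus one s2 t X2 T2).
Qed.
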